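(* In the setting of the context, let $1\le i<j<k\le m$ be integers and $p',q,r$ integers such that $s_i^{p'}s_j^{q}s_k^{r}=e$ in $G_m$. Then $p'=q=r=0$.
   Context: $H$ is a finitely presented group with finite generating set $T$, containing a free subgroup $F$ of rank $p$ with free basis $\{d_1,\dots,d_p\}\subset T$ (standing assumption: $\mathrm{Dist}_F^H$ admits an exponentially bounded sequence of palindromic certificates in $F$). $F_x,F_y,F_z$ are free of rank $p$ with bases $\{x_i\},\{y_i\},\{z_i\}$. $G_1=[H\ast_{\langle d_i=x_iy_i^{-1}\rangle}(F_x\times F_y\times F_z)]\times\langle s_1\rangle$; $G_2=\langle G_1,s_2\mid s_2^{-1}(x_iz_i)s_2=y_iz_i,\ 1\le i\le p\rangle$; $G_l=\langle G_{l-1},s_l\mid s_l^{-1}s_1s_l=s_{l-1}\rangle$ for $l\ge3$. *)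

(* Groups given by presentations, encoded as words over a
   generator type modulo the congruence generated by the relations. *)
From mathcomp Require Import all_boot all_order all_algebra.
Set Implicit Arguments. Unset Strict Implicit. Unset Printing Implicit Defensive.
Import GRing.Theory Num.Theory.

(* A letter is a generator together with a flag: false = x, true = x^{-1}. *)
Definition word (X : Type) := seq (X * bool).

(* The congruence on words generated by free cancellation and the relations
   R: two words are equal in the group <X | R> iff they are related. *)
Inductive peq (X : Type) (R : word X -> word X -> Prop) : word X -> word X -> Prop :=
| peq_refl w : peq R w w
| peq_sym u v : peq R u v -> peq R v u
| peq_trans u v w : peq R u v -> peq R v w -> peq R u w
| peq_cat u u' v v' : peq R u u' -> peq R v v' -> peq R (u ++ v) (u' ++ v')
| peq_inv x b : peq R [:: (x, b); (x, ~~ b)] [::]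
| peq_rel u v : R u v -> peq R u v.

Definition wmap (X Y : Type) (f : X -> Y) (w : word X) : word Y :=
  map (fun a => (f a.1, a.2)) w.

Fixpoint reduced (X : eqType) (w : word X) : bool :=
  match w with
  | a :: ((b :: _) as w') => ~~ ((a.1 == b.1) && (a.2 == ~~ b.2)) && reduced w'
  | _ => true
  end.

Definition Hrel (T : finType) (RH : seq (word T * word T)) (u v : word T) : Prop :=
  (u, v) \in RH.

(* {d_1,...,d_p} is a free basis of the subgroup F of H it generates:
   no nonempty freely reduced word in the d_i is trivial in H. *)
Definition free_basis (T : finType) (RH : seq (word T * word T)) (p : nat)
  (d : 'I_p -> T) : Prop :=
  forall w : word 'I_p, reduced w -> w <> [::] ->
    ~ peq (Hrel RH) (wmap d w) [::].

(* Generators of G_m: those of H, x_i, y_i, z_i (i < p), and s_l, l < m.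
   gs l stands for s_{l+1} (0-based indexing). *)
Inductive gen (T : Type) (p m : nat) : Type :=
| gH of T
| gx of 'I_p
| gy of 'I_p
| gz of 'I_p
| gs of 'I_m.

Section Gm.
Variables (T : finType) (RH : seq (word T * word T)) (p : nat) (d : 'I_p -> T) (m : nat).
Local Notation G := (gen T p m).
Definition lt (g : G) : word G := [:: (g, false)].
Definition lti (g : G) : word G := [:: (g, true)].

(* is g a generator of H *_{d_i = x_i y_i^{-1}} (F_x x F_y x F_z) ? *)
Definition amalg_gen (g : G) : bool :=
  match g with gs _ => false | _ => true end.

Inductive Grel : word G -> word G -> Prop :=
| GrH u v : (u, v) \in RH -> Grel (wmap (@gH T p m) u) (wmap (@gH T p m) v)
| Gamalg i : Grel (lt (gH p m (d i))) (lt (gx T m i) ++ lti (gy T m i))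
(* F_x x F_y x F_z : generators of different factors commute *)
| Gxy i j : Grel (lt (gx T m i) ++ lt (gy T m j)) (lt (gy T m j) ++ lt (gx T m i))
| Gxz i j : Grel (lt (gx T m i) ++ lt (gz T m j)) (lt (gz T m j) ++ lt (gx T m i))
| Gyz i j : Grel (lt (gy T m i) ++ lt (gz T m j)) (lt (gz T m j) ++ lt (gy T m i))
(* G_1 = [...] x <s_1> : s_1 commutes with the amalgam's generators *)
| Gs1 (o : 'I_m) (g : G) : val o = 0 -> amalg_gen g ->
    Grel (lt (gs T p o) ++ lt g) (lt g ++ lt (gs T p o))
| Gs2 (l : 'I_m) i : val l = 1 ->
    Grel (lti (gs T p l) ++ lt (gx T m i) ++ lt (gz T m i) ++ lt (gs T p l))
         (lt (gy T m i) ++ lt (gz T m i))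
| Gsl (l l' o : 'I_m) : 2 <= val l -> val l' = (val l).-1 -> val o = 0 ->
    Grel (lti (gs T p l) ++ lt (gs T p o) ++ lt (gs T p l)) (lt (gs T p l')).

Definition Geq (u v : word G) : Prop := peq Grel u v.

Definition spow (l : 'I_m) (n : int) : word G :=
  match n with
  | Posz k => nseq k (gs T p l, false)
  | Negz k => nseq k.+1 (gs T p l, true)
  end.
End Gm.

From mathcomp Require Import all_boot all_order all_algebra.
From mathcomp Require Import ring zify.
Import GRing.Theory Num.Theory.
Set Implicit Arguments. Unset Strict Implicit. Unset Printing Implicit Defensive.
Local Open Scope ring_scope.

(* G_m acts by affine maps on any commutative ring in which 1 - ell is a unit:
   all generators except the s_l act trivially, s_1 is the dilation
   t |-> (1 - ell) t, and s_(l+1), l >= 1, is t |-> (1 - ell) t + ell^(m-1-l).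
   Over Z/L^(m-k) with ell = L > |r|, the letters s_i and s_j then have zero
   translation part while s_k^r translates by r L^(m-1-k), which vanishes only
   for r = 0; the same argument at level j gives q = 0.  Over Q with ell = -1,
   s_i^p' is the dilation by 2^p', so p' = 0. *)

Section AffineGroup.
Variable R : comUnitRingType.

(* [(a, b)] is the affine map [t |-> a t + b]; [affmul x y] applies [x] first. *)
Definition affmul (x y : R * R) : R * R := (x.1 * y.1, y.1 * x.2 + y.2).
Definition affinv (x : R * R) : R * R := (x.1^-1, - (x.1^-1 * x.2)).

Lemma affmulA : associative affmul.
Proof. by move=> x y z; rewrite /affmul /=; congr pair; ring. Qed.

Lemma aff1mul : left_id (1, 0) affmul.
Proof. by case=> a b; rewrite /affmul /=; congr pair; ring. Qed.

Lemma affmul1 : right_id (1, 0) affmul.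
Proof. by case=> a b; rewrite /affmul /=; congr pair; ring. Qed.

Lemma affmulV x : x.1 \is a GRing.unit -> affmul x (affinv x) = (1, 0).
Proof. by case: x => a b /= ua; rewrite /affmul /= mulrV //; congr pair; ring. Qed.

Lemma affVmul x : x.1 \is a GRing.unit -> affmul (affinv x) x = (1, 0).
Proof.
by case: x => a b /= ua; rewrite /affmul /= mulVr // mulrN mulrA mulrV // mul1r addNr.
Qed.

Lemma affinv1 : affinv (1, 0) = (1, 0).
Proof. by rewrite /affinv /= invr1 mulr0 oppr0. Qed.

Lemma affconj_dilation c x : x.1 \is a GRing.unit ->
  affmul (affinv x) (affmul (c, 0) x) = (c, (1 - c) * x.2).
Proof.
case: x => a b /= ua; rewrite /affmul /affinv /=; congr pair.
  by rewrite mulrCA mulVr // mulr1.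
by rewrite mulrN mulrA -(mulrA c) mulrV // mulr1; ring.
Qed.

Lemma unitr1B_nilpotent (x : R) n : x ^+ n = 0 -> (1 - x) \is a GRing.unit.
Proof.
move=> xn0; apply/unitrPr; exists (\sum_(i < n) x ^+ i).
by rewrite -opprB mulNr -subrX1 xn0 sub0r opprK.
Qed.

Section Evaluation.
Variables (X : Type) (f : X -> R * R).

Definition affletter (a : X * bool) : R * R := if a.2 then affinv (f a.1) else f a.1.

Definition affeval (w : word X) : R * R := foldr (affmul \o affletter) (1, 0) w.

Lemma affeval_cat u v : affeval (u ++ v) = affmul (affeval u) (affeval v).
Proof. by elim: u => [|a u IHu] /=; rewrite ?aff1mul // IHu affmulA. Qed.

Lemma affeval_wmap_id (Y : Type) (g : Y -> X) (w : word Y) :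
  (forall y, f (g y) = (1, 0)) -> affeval (wmap g w) = (1, 0).
Proof.
move=> fg1; elim: w => [|a w IHw] //=.
by rewrite IHw affmul1 /affletter /= fg1; case: a.2; rewrite ?affinv1.
Qed.

Lemma affeval_peq (rel : word X -> word X -> Prop) :
  (forall x, (f x).1 \is a GRing.unit) ->
  (forall u v, rel u v -> affeval u = affeval v) ->
  forall u v, peq rel u v -> affeval u = affeval v.
Proof.
move=> f_unit f_rel u v; elim=> {u v}.
- by [].
- by move=> u v _ ->.
- by move=> u v w _ -> _ ->.
- by move=> u u' v v' _ eu _ ev; rewrite !affeval_cat eu ev.
- move=> x [] /=; rewrite affmul1 /affletter /=.
  + by rewrite affVmul.
  + by rewrite affmulV.
- exact: f_rel.
Qed.

Lemma affeval_nseq_fst n a : (affeval (nseq n a)).1 = (affletter a).1 ^+ n.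
Proof. by elim: n => //= n ->; rewrite exprS. Qed.

Lemma affeval_nseq_snd n a : (affletter a).1 * (affletter a).2 = (affletter a).2 ->
  (affeval (nseq n a)).2 = (affletter a).2 *+ n.
Proof.
move=> fix_b; elim: n => //= n IHn.
rewrite /affmul /= IHn affeval_nseq_fst mulrS; congr (_ + _).
by elim: n {IHn} => [|n IHn]; rewrite ?mul1r // exprSr -mulrA fix_b.
Qed.

End Evaluation.
End AffineGroup.

Section Representation.
Variables (T : finType) (RH : seq (word T * word T)) (p : nat) (d : 'I_p -> T) (m : nat).

Definition s_below (k : nat) (a : gen T p m * bool) : bool :=
  if a.1 is gs l then (l < k)%N else true.

Lemma s_below_spow (l : 'I_m) k n : (l < k)%N -> all (s_below k) (spow T p l n).
Proof. by case: n => n lk; rewrite all_nseq /s_below /= lk ?orbT. Qed.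

Variables (R : comUnitRingType) (ell : R).

(* Conjugating [(1 - ell, 0)] by [(a, b)] gives [(1 - ell, ell * b)], so the
   relation [s_l^-1 s_1 s_l = s_(l-1)] holds when the translation part of
   [s_(l-1)] is [ell] times that of [s_l]. *)
Definition srep_s (l : 'I_m) : R * R :=
  (1 - ell, if val l == 0%N then 0 else ell ^+ (m.-1 - l)).
Arguments srep_s : simpl never.

Definition srep (g : gen T p m) : R * R := if g is gs l then srep_s l else (1, 0).

Hypothesis unit_1subl : (1 - ell) \is a GRing.unit.

Lemma srep_unit g : (srep g).1 \is a GRing.unit.
Proof. by case: g => * //=; rewrite unitr1. Qed.

Lemma srep_Grel u v : Grel RH d u v -> affeval srep u = affeval srep v.
Proof.
case=> {u v} [u v _ | i | i j | i j | i j | o g o0 g_amalg | l i _ | l l' o l_ge2 l'E o0].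
- by rewrite !affeval_wmap_id.
all: rewrite /affeval /= /affletter /= ?affinv1 ?affmul1 ?aff1mul //.
- by case: g g_amalg => // *; rewrite affmul1 aff1mul.
- by rewrite affVmul // (srep_unit (gs T p l)).
- move: l_ge2 l'E => /= l_ge2 l'E.
  have [l_gt0 l'_gt0] : (0 < l)%N /\ (0 < l')%N by lia.
  rewrite /srep_s o0 affconj_dilation ?srep_unit //= !eqn0Ngt l_gt0 l'_gt0 /=.
  have -> : (m.-1 - l' = (m.-1 - l).+1)%N by have := ltn_ord l; lia.
  by rewrite subKr exprS.
Qed.

Lemma srep_Geq u v : Geq RH d u v -> affeval srep u = affeval srep v.
Proof. exact/affeval_peq/srep_Grel/srep_unit. Qed.

Lemma srep_s_fix (l : 'I_m) : ell ^+ (m - l) = 0 ->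
  (1 - ell) * (srep_s l).2 = (srep_s l).2.
Proof.
rewrite /srep_s /=; case: eqP => _ ellN; first by rewrite mulr0.
have ml : (m - l = (m.-1 - l).+1)%N by have := ltn_ord l; lia.
by rewrite mulrBl mul1r -exprS -ml ellN subr0.
Qed.

Lemma srep_spow_fst (l : 'I_m) n : (affeval srep (spow T p l n)).1 = (1 - ell) ^ n.
Proof. by case: n => n; rewrite /spow affeval_nseq_fst //= exprVn. Qed.

Lemma srep_spow_snd (l : 'I_m) n : ell ^+ (m - l) = 0 ->
  (affeval srep (spow T p l n)).2 = (srep_s l).2 *~ n.
Proof.
move=> /srep_s_fix fix_b; have inv_fix : (1 - ell)^-1 * (srep_s l).2 = (srep_s l).2.
  by rewrite -{1}fix_b mulKr.
case: n => n; rewrite /spow affeval_nseq_snd //= ?inv_fix ?mulNrn //.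
by rewrite mulrN inv_fix.
Qed.

Lemma srep_s_below (l : 'I_m) k : (l < k)%N -> ell ^+ (m - k) = 0 -> (srep_s l).2 = 0.
Proof.
rewrite /srep_s /=; case: eqP => // _ lk ellN.
have mkl : (m - k <= m.-1 - l)%N by have := ltn_ord l; lia.
by rewrite -(subnKC mkl) exprD ellN mul0r.
Qed.

Lemma affeval_s_below k w : ell ^+ (m - k) = 0 -> all (s_below k) w ->
  (affeval srep w).2 = 0.
Proof.
move=> ellN; elim: w => [|[g b] w IHw] //= /andP[g_below w_below].
rewrite /affmul /= IHw // addr0.
have g0 : (srep g).2 = 0.
  by case: g g_below => [t|t|t|t|l] //= lk; apply: srep_s_below lk ellN.
by case: b {g_below}; rewrite /affletter /= g0 ?mulr0 ?oppr0 ?mulr0.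
Qed.

Lemma srep_top_translation (k : 'I_m) u c : (0 < k)%N -> ell ^+ (m - k) = 0 -> all (s_below k) u ->
  Geq RH d (u ++ spow T p k c) [::] -> ell ^+ (m.-1 - k) *~ c = 0.
Proof.
move=> k_gt0 ellN u_below /srep_Geq /(congr1 snd).
rewrite affeval_cat /= (affeval_s_below ellN) // mulr0 add0r srep_spow_snd //.
by rewrite /srep_s /= eqn0Ngt k_gt0.
Qed.

End Representation.

Lemma Zp_natX_mulz_eq0 (L n : nat) (c : int) : (1 < L)%N -> (`|c| < L)%N ->
  (L%:R : 'Z_(L ^ n.+1)) ^+ n *~ c = 0 -> c = 0.
Proof.
move=> L_gt1 cL; have N_gt1 : (1 < L ^ n.+1)%N by rewrite -(exp1n n.+1) ltn_exp2r.
have mulrn_eq0 k : (k < L)%N -> (L%:R : 'Z_(L ^ n.+1)) ^+ n *+ k = 0 -> k = 0%N.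
  move=> kL /(congr1 val); rewrite -natrX -mulr_natr -natrM /= val_Zp_nat // => /eqP.
  rewrite -/(dvdn _ _) expnSr dvdn_pmul2l ?expn_gt0 ?(ltnW L_gt1) //.
  by case: k kL => // k kL /(dvdn_leq (ltn0Sn k)); lia.
case: c cL => k kL.
- by move=> /(mulrn_eq0 k kL) ->.
- by move=> /eqP; rewrite oppr_eq0 => /eqP /(mulrn_eq0 k.+1 kL).
Qed.

Lemma top_spow_exponent_eq0 (T : finType) (RH : seq (word T * word T)) (p : nat)
  (d : 'I_p -> T) (m : nat) (k : 'I_m) u c : (0 < k)%N -> all (s_below k) u ->
  Geq RH d (u ++ spow T p k c) [::] -> c = 0.
Proof.
move=> k_gt0 u_below; set n := (m.-1 - k)%N; set L := (`|c|.+2)%N.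
have mk : (m - k = n.+1)%N by rewrite /n; have := ltn_ord k; lia.
pose ell : 'Z_(L ^ n.+1) := L%:R.
have ellN : ell ^+ (m - k) = 0 by rewrite mk -natrX pchar_Zp // -(exp1n n.+1) ltn_exp2r.
move=> /(srep_top_translation (unitr1B_nilpotent ellN) k_gt0 ellN u_below).
exact: Zp_natX_mulz_eq0.
Qed.

Lemma spow_exponent_eq0 (T : finType) (RH : seq (word T * word T)) (p : nat)
  (d : 'I_p -> T) (m : nat) (l : 'I_m) n : Geq RH d (spow T p l n) [::] -> n = 0.
Proof.
have two_unit : (1 - (-1) : rat) \is a GRing.unit by [].
move=> /(srep_Geq two_unit) /(congr1 fst); rewrite srep_spow_fst /= => /eqP.
by rewrite pexprz_eq1 // => /orP[/eqP | //].
Qed.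

Theorem lemma3p5 (T : finType) (RH : seq (word T * word T)) (p : nat)
  (d : 'I_p -> T) (Hfree : free_basis RH d) (m : nat) (i j k : 'I_m)
  (hij : (i < j)%N) (hjk : (j < k)%N) (p' q r : int) :
  Geq RH d (spow T p i p' ++ spow T p j q ++ spow T p k r) [::] ->
  [/\ p' = 0, q = 0 & r = 0].
Proof.
move=> rel; have r0 : r = 0.
  rewrite catA in rel; apply: (top_spow_exponent_eq0 _ _ rel).
    exact: leq_ltn_trans hjk.
  by rewrite all_cat !s_below_spow // (ltn_trans hij hjk).
move: rel; rewrite r0 cats0 => rel; have q0 : q = 0.
  apply: (top_spow_exponent_eq0 _ _ rel); first exact: leq_ltn_trans hij.
  exact: s_below_spow.
by split=> //; move: rel; rewrite q0 cats0 => /spow_exponent_eq0.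
Qed.
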